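(* Let $S$ be a finite semigroup and $J$ a regular $\mathscr J$-class of $S$ such that for any two distinct $\mathscr L$-classes $L,L'$ of $J$ there is an $\mathscr R$-class $R$ of $J$ such that exactly one of $R\cap L$ and $R\cap L'$ contains an idempotent. Then, for any right $G_J$-set $X$, the Green's congruence with respect to $e_J$ on $X\otimes_{G_J}R_J$ is the equality relation.
   Context: Semigroups act on the right; $e_J\in J$ is a fixed idempotent, $G_J$ its maximal subgroup, $R_J$ its $\mathscr R$-class, a partial $S$-set via $r\cdot s=rs$ if $rs\in R_J$, undefined otherwise. For a right $G_J$-set $X$, $X\otimes_{G_J}R_J$ is the set of orbits of $X\times R_J$ under $(x,r)g=(xg,g^{-1}r)$, orbits written $x\otimes r$, with partial right $S$-action $(x\otimes r)s=x\otimes rs$ if $rs\in R_J$ and undefined otherwise. The Green's congruence with respect to $e_J$ on a partial $S$-set $\Lambda$ is $\alpha\sim\beta$ iff for all $s\in S$, $\alpha se_J$ and $\beta se_J$ are both undefined or both defined and equal. *)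

(* Green's relations are defined via S^1. *)
From mathcomp Require Import all_boot.
Set Implicit Arguments. Unset Strict Implicit. Unset Printing Implicit Defensive.

Section Green.
Variables (S : Type) (mul : S -> S -> S).

Definition in_rideal (a b : S) : Prop := a = b \/ exists s, a = mul b s.
Definition in_lideal (a b : S) : Prop := a = b \/ exists s, a = mul s b.
Definition in_ideal (a b : S) : Prop :=
  a = b \/ (exists s, a = mul s b) \/ (exists t, a = mul b t)
  \/ exists s t, a = mul (mul s b) t.

Definition Rrel (a b : S) : Prop := in_rideal a b /\ in_rideal b a.
Definition Lrel (a b : S) : Prop := in_lideal a b /\ in_lideal b a.
Definition Hrel (a b : S) : Prop := Rrel a b /\ Lrel a b.
Definition Jrel (a b : S) : Prop := in_ideal a b /\ in_ideal b a.

Definition idem_elt (e : S) : Prop := mul e e = e.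
Definition regular_elt (a : S) : Prop := exists x, mul (mul a x) a = a.

Definition regular_Jclass (j0 : S) : Prop :=
  forall a, Jrel a j0 -> regular_elt a.

Definition contains_idem_RL (c a : S) : Prop :=
  exists f, idem_elt f /\ Rrel f c /\ Lrel f a.

Definition Lclasses_separated (j0 : S) : Prop :=
  forall a b, Jrel a j0 -> Jrel b j0 -> ~ Lrel a b ->
    exists c, Jrel c j0 /\
      ((contains_idem_RL c a /\ ~ contains_idem_RL c b) \/
       (~ contains_idem_RL c a /\ contains_idem_RL c b)).

(* G_J = H-class of e (maximal subgroup), R_J = R-class of e. *)
(* A right G_J-set: act : X -> S -> X, only its values on G_J matter. *)
Definition right_GJ_set (e : S) (X : Type) (act : X -> S -> X) : Prop :=
  (forall x, act x e = x) /\
  (forall x g h, Hrel g e -> Hrel h e -> act (act x g) h = act x (mul g h)).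

(* Equality in X ⊗_{G_J} R_J of the orbits x ⊗ r and x' ⊗ r' :
   (x', r') = (x g, g^{-1} r) for some g in G_J, with inverse gi in G_J. *)
Definition tensor_eq (e : S) (X : Type) (act : X -> S -> X)
  (x : X) (r : S) (x' : X) (r' : S) : Prop :=
  exists g gi, Hrel g e /\ Hrel gi e /\ mul g gi = e /\ mul gi g = e /\
    x' = act x g /\ r' = mul gi r.

(* ((x ⊗ r) s) e_J is defined iff r s ∈ R_J and (r s) e_J ∈ R_J; its value is
   x ⊗ (r s) e_J. *)
Definition tdef (e r s : S) : Prop := Rrel (mul r s) e /\ Rrel (mul (mul r s) e) e.

Definition green_cong (e : S) (X : Type) (act : X -> S -> X)
  (x : X) (r : S) (x' : X) (r' : S) : Prop :=
  forall s,
    (tdef e r s <-> tdef e r' s) /\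
    (tdef e r s -> tdef e r' s ->
       tensor_eq e act x (mul (mul r s) e) x' (mul (mul r' s) e)).

End Green.

From mathcomp Require Import all_boot zify.
From Stdlib Require Import Classical.
Set Implicit Arguments. Unset Strict Implicit.

(** Let [r, r'] be in [R_J] and Green-congruent. Choosing [z] with [r z = e_J],
    both [r z e_J] and [r' z e_J] are defined, which yields [g] in [G_J] with
    [x' = x g] and [g^-1 = r' z e_J]; hence [x ⊗ r = x' ⊗ r'] as soon as
    [r' = g^-1 r], i.e. as soon as [r L r'].  If [r] and [r'] were not
    [L]-related, the hypothesis would give an [R]-class [R_c] of [J] and an
    idempotent [f] in [R_c ∩ L_r] (say) but none in [R_c ∩ L_r'].  Now
    [r f z = e_J], so [r' f z] is defined, whence [r' f R r']; by stability of
    the finite semigroup [S] also [r' f L f], and the Clifford–Miller argument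
    produces an idempotent in [R_f ∩ L_r' = R_c ∩ L_r'], a contradiction. *)

Section GreenPreorders.
Variables (S : Type) (mul : S -> S -> S).
Hypothesis mulA : forall a b c, mul a (mul b c) = mul (mul a b) c.

Lemma in_rideal_trans a b c :
  in_rideal mul a b -> in_rideal mul b c -> in_rideal mul a c.
Proof.
case=> [->|[s ->]] // [->|[t ->]]; right; first by exists s.
by exists (mul t s); rewrite mulA.
Qed.

Lemma Rrel_trans a b c : Rrel mul a b -> Rrel mul b c -> Rrel mul a c.
Proof.
move=> [ab ba] [bc cb].
by split; [apply: in_rideal_trans ab bc | apply: in_rideal_trans cb ba].
Qed.

Lemma in_ideal_mull s a b : in_ideal mul a b -> in_ideal mul (mul s a) b.
Proof.
case=> [->|[[s' ->]|[[t ->]|[s' [t ->]]]]].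
- by right; left; exists s.
- by right; left; exists (mul s s'); rewrite mulA.
- by do 3 right; exists s, t; rewrite mulA.
- by do 3 right; exists (mul s s'), t; rewrite !mulA.
Qed.

Lemma in_ideal_mulr t a b : in_ideal mul a b -> in_ideal mul (mul a t) b.
Proof.
case=> [->|[[s ->]|[[t' ->]|[s [t' ->]]]]].
- by do 2 right; left; exists t.
- by do 3 right; exists s, t.
- by do 2 right; left; exists (mul t' t); rewrite mulA.
- by do 3 right; exists s, (mul t' t); rewrite mulA.
Qed.

Lemma in_ideal_trans a b c :
  in_ideal mul a b -> in_ideal mul b c -> in_ideal mul a c.
Proof.
case=> [->|[[s ->]|[[t ->]|[s [t ->]]]]] bc //.
- exact: in_ideal_mull.
- exact: in_ideal_mulr.
- exact/in_ideal_mulr/in_ideal_mull.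
Qed.

Lemma Jrel_sym a b : Jrel mul a b -> Jrel mul b a.
Proof. by case. Qed.

Lemma Jrel_trans a b c : Jrel mul a b -> Jrel mul b c -> Jrel mul a c.
Proof.
move=> [ab ba] [bc cb].
by split; [apply: in_ideal_trans ab bc | apply: in_ideal_trans cb ba].
Qed.

Lemma in_rideal_in_ideal a b : in_rideal mul a b -> in_ideal mul a b.
Proof. by case=> [->|[t ->]]; [left | do 2 right; left; exists t]. Qed.

Lemma Rrel_Jrel a b : Rrel mul a b -> Jrel mul a b.
Proof. by case=> ab ba; split; apply: in_rideal_in_ideal. Qed.

Lemma idem_regular e : idem_elt mul e -> regular_elt mul e.
Proof. by move=> ee; exists e; rewrite !ee. Qed.

Lemma idem_in_rideal e b : idem_elt mul e -> in_rideal mul e b ->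
  exists t, e = mul b t.
Proof. by move=> ee [eb|//]; exists e; rewrite -eb ee. Qed.

Lemma regular_in_rideal a b : regular_elt mul b -> in_rideal mul a b ->
  exists t, a = mul b t.
Proof. by move=> [x bxb] [->|//]; exists (mul x b); rewrite mulA. Qed.

Lemma regular_in_lideal a b : regular_elt mul b -> in_lideal mul a b ->
  exists s, a = mul s b.
Proof. by move=> [x bxb] [->|//]; exists (mul b x). Qed.

Lemma regular_in_ideal a b : regular_elt mul b -> in_ideal mul a b ->
  exists s t, a = mul (mul s b) t.
Proof.
move=> [x bxb] [->|[[s ->]|[[t ->]|//]]].
- by exists (mul b x), (mul x b); rewrite mulA bxb.
- by exists s, (mul x b); rewrite -!mulA (mulA b x b) bxb.
- by exists (mul b x), t; rewrite bxb.
Qed.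

Lemma in_rideal_idem_mul e a : idem_elt mul e -> in_rideal mul a e ->
  mul e a = a.
Proof. by move=> ee [->|[t ->]]; rewrite ?mulA ee. Qed.

Lemma in_lideal_idem_mul f a : idem_elt mul f -> in_lideal mul a f ->
  mul a f = a.
Proof. by move=> ff [->|[s ->]]; rewrite -?mulA ff. Qed.

End GreenPreorders.

Section FiniteSemigroup.
Variables (S : finType) (mul : S -> S -> S).
Hypothesis mulA : forall a b c, mul a (mul b c) = mul (mul a b) c.

(* [pow n x] is the power [x^(n+1)]: a semigroup has no [x^0]. *)
Fixpoint pow (n : nat) (x : S) : S :=
  if n is n'.+1 then mul x (pow n' x) else x.

Lemma mul_pow m n x : mul (pow m x) (pow n x) = pow (m + n).+1 x.
Proof. by elim: m => [//|m IHm] /=; rewrite -mulA IHm. Qed.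

Lemma powSr n x : pow n.+1 x = mul (pow n x) x.
Proof. by rewrite -[in RHS]/(pow 0 x) mul_pow addn0. Qed.

Lemma pow_periodic x : exists i d, 0 < d /\ pow i x = pow (i + d) x.
Proof.
have : ~~ injectiveb (fun k : 'I_#|S|.+1 => pow k x).
  apply/negP => /injectiveP pow_inj.
  by have := leq_card _ pow_inj; rewrite card_ord ltnn.
case/injectivePn => i [j] neq_ij eq_pow.
case: (ltngtP i j) => [lt_ij|lt_ji|/val_inj eq_ij].
- by exists i, (j - i); rewrite subn_gt0 eq_pow subnKC // ltnW.
- by exists j, (i - j); rewrite subn_gt0 -eq_pow subnKC // ltnW.
- by rewrite eq_ij eqxx in neq_ij.
Qed.

Lemma idem_pow x : exists k, idem_elt mul (pow k x).
Proof.
have [i [d [d_gt0 per]]] := pow_periodic x.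
have shift n : pow (n + i) x = pow (n + (i + d)) x.
  by elim: n => [//|n IHn]; rewrite !addSn /= IHn.
have per_mul m t : pow (m + i) x = pow (m + i + t * d) x.
  elim: t => [|t IHt]; first by rewrite addn0.
  rewrite IHt (_ : m + i + t.+1 * d = m + t * d + (i + d)); last by lia.
  by rewrite -shift; congr pow; lia.
exists (d * i + d - 1); rewrite /idem_elt mul_pow.
have := per_mul (d * i + d - 1 - i) i.+1.
have -> : d * i + d - 1 - i + i = d * i + d - 1 by nia.
by move=> ->; congr pow; nia.
Qed.

(* Stability: if [a <=_L b] and [b <=_J a] then [b <=_L a]. *)
Lemma lideal_stability a b u v p :
  b = mul (mul u a) v -> a = mul p b -> exists q, b = mul q a.
Proof.
move=> b_uav a_pb; set x := mul u p.
have b_xbv : b = mul (mul x b) v by rewrite /x {1}b_uav a_pb !mulA.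
have b_pow n : b = mul (mul (pow n x) b) (pow n v).
  elim: n => [//|n IHn]; rewrite [pow n.+1 v]powSr /= !mulA.
  by rewrite {1}b_xbv {1}IHn !mulA.
have [k idem_k] := idem_pow x.
have b_kb : b = mul (pow k x) b by rewrite {2}(b_pow k) !mulA idem_k -b_pow.
exists (mul (pow (k + k) x) u).
by rewrite b_kb -idem_k mul_pow powSr /x a_pb !mulA.
Qed.

(* One half of the Clifford–Miller theorem: if [a f R a] and [a f J f] then
   [R_f ∩ L_a] contains the idempotent [f y]. *)
Lemma contains_idem_RL_of_mul a f y s t : idem_elt mul f ->
  a = mul (mul a f) y -> f = mul (mul s (mul a f)) t ->
  contains_idem_RL mul f a.
Proof.
move=> ff a_afy f_le_af.
have [q f_qaf] := lideal_stability f_le_af (erefl (mul a f)).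
have fy_qa : mul f y = mul q a by rewrite {1}f_qaf -mulA -a_afy.
exists (mul f y); split; [|split; split].
- by rewrite /idem_elt {1}fy_qa -mulA (mulA a) -a_afy fy_qa.
- by right; exists y.
- by right; exists f; rewrite fy_qa -mulA -f_qaf.
- by right; exists q.
- by right; exists a; rewrite mulA -a_afy.
Qed.

End FiniteSemigroup.

Section GreenCongruence.
Variables (S : finType) (mul : S -> S -> S).
Hypothesis mulA : forall a b c, mul a (mul b c) = mul (mul a b) c.
Variables (e : S) (X : Type) (act : X -> S -> X).
Hypothesis ee : idem_elt mul e.

Lemma contains_idem_RL_transfer r1 r2 c :
  Rrel mul r1 e -> Rrel mul r2 e -> in_ideal mul c e ->
  (forall s, tdef mul e r1 s -> tdef mul e r2 s) ->
  contains_idem_RL mul c r1 -> contains_idem_RL mul c r2.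
Proof.
move=> Rr1 Rr2 ce tdef12 [f [ff [Rfc Lfr1]]].
have [z e_r1z] := idem_in_rideal ee Rr1.2.
have [[_ e_le_r2fz] _] : tdef mul e r2 (mul f z).
  apply: tdef12; rewrite /tdef mulA (in_lideal_idem_mul mulA ff Lfr1.2).
  by rewrite -e_r1z ee; split; split; left.
have [w e_r2fzw] := idem_in_rideal ee e_le_r2fz.
have [t2 r2_et2] := regular_in_rideal mulA (idem_regular ee) Rr2.1.
have r2_r2fy : r2 = mul (mul r2 f) (mul (mul z w) t2).
  by rewrite {1}r2_et2 e_r2fzw !mulA.
have [s0 [t0 c_s0et0]] := regular_in_ideal mulA (idem_regular ee) ce.
have [tc f_ctc] := idem_in_rideal ff Rfc.1.
have [t3 e_r2t3] := idem_in_rideal ee Rr2.2.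
have f_le_r2f : f = mul (mul s0 (mul r2 f))
                        (mul (mul (mul z w) t2) (mul (mul t3 t0) tc)).
  by rewrite {1}f_ctc c_s0et0 e_r2t3 {1}r2_r2fy !mulA.
have [h [hh [Rhf Lhr2]]] := contains_idem_RL_of_mul mulA ff r2_r2fy f_le_r2f.
by exists h; split; [|split; first exact: Rrel_trans Rhf Rfc].
Qed.

Lemma green_cong_Lrel j0 r r' : Lclasses_separated mul j0 -> Jrel mul e j0 ->
  Rrel mul r e -> Rrel mul r' e ->
  (forall s, tdef mul e r s <-> tdef mul e r' s) -> Lrel mul r r'.
Proof.
move=> sepJ eJ Rr Rr' tdefE; apply: NNPP => nLrr'.
have [c [cJ sep_c]] :=
  sepJ r r' (Jrel_trans mulA (Rrel_Jrel Rr) eJ)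
    (Jrel_trans mulA (Rrel_Jrel Rr') eJ) nLrr'.
have ce : in_ideal mul c e := (Jrel_trans mulA cJ (Jrel_sym eJ)).1.
case: sep_c => [[idem_cr no_idem_cr'] | [no_idem_cr idem_cr']].
- apply: no_idem_cr'.
  by apply: contains_idem_RL_transfer idem_cr => // s /tdefE.
- apply: no_idem_cr.
  by apply: contains_idem_RL_transfer idem_cr' => // s /tdefE.
Qed.

Lemma tensor_eq_of_Lrel x x' r r' : Rrel mul r e -> in_lideal mul r' r ->
  green_cong mul e act x r x' r' -> tensor_eq mul e act x r x' r'.
Proof.
move=> Rr Lr'r gc.
have er : mul e r = r := in_rideal_idem_mul mulA ee Rr.1.
have [z e_rz] := idem_in_rideal ee Rr.2.
have [u r'_ur] : exists u, r' = mul u r.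
  by apply: regular_in_lideal Lr'r; exists z; rewrite -e_rz er.
have tdef_rz : tdef mul e r z by rewrite /tdef -e_rz ee; split; split; left.
have [g [gi [Hg [Hgi [ggi [gig [-> r'ze]]]]]]] :=
  (gc z).2 tdef_rz ((gc z).1.1 tdef_rz).
exists g, gi; do 5 split => //; rewrite r'_ur.
have gie : mul gi e = gi := in_lideal_idem_mul mulA ee Hgi.2.1.
rewrite -e_rz ee gie r'_ur -(mulA u) -e_rz -mulA ee in r'ze.
by rewrite -r'ze -mulA er.
Qed.

End GreenCongruence.

Theorem proposition2p9 (S : finType) (mul : S -> S -> S)
  (mulA : forall a b c, mul a (mul b c) = mul (mul a b) c)
  (j0 : S) (Jreg : regular_Jclass mul j0)
  (Hsep : Lclasses_separated mul j0)
  (e : S) (eJ : Jrel mul e j0) (eidem : idem_elt mul e)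
  (X : Type) (act : X -> S -> X) (Xset : right_GJ_set mul e act) :
  forall (x x' : X) (r r' : S), Rrel mul r e -> Rrel mul r' e ->
    green_cong mul e act x r x' r' -> tensor_eq mul e act x r x' r'.
Proof.
move=> x x' r r' Rr Rr' gc.
have Lrr' : Lrel mul r r'.
  by apply: (green_cong_Lrel mulA eidem Hsep eJ Rr Rr') => s; exact: (gc s).1.
exact: (tensor_eq_of_Lrel mulA eidem Rr Lrr'.2 gc).
Qed.
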